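(* In any execution of Algorithm $\gamma$n-Burst, within any time interval $I^+$ during which at all times at least $n^2$ tasks of cost $\ell_{\max}$ are pending in $\gamma$n-Burst, each $\ell_{\max}$-task has at most one absolute task execution fully contained in $I^+$ (all such absolute task executions appear exactly once).
   Context: Model: $n$ processors with ids $1,\dots,n$ and a shared repository; tasks with ids, arrival times and costs $\ell_{\min}$ or $\ell_{\max}$ ($0<\ell_{\min}<\ell_{\max}$) are injected over time; processors may crash and restart (restarted processors remember only the algorithm and $n$). A task is pending if injected and its completion not yet reported; once reported it is immediately removed. A processor repeatedly obtains the pending set, chooses a task, executes it (a task of cost $\ell$ takes time $\ell/s$ with speedup $s>1$) and reports it; execution is non-preemptive and a crash loses progress. An absolute task execution of $\tau$ is an interval $[t,t']$ in which a processor schedules $\tau$ at $t$ and reports it at $t'$ without stopping in $[t,t')$. Algorithm $\gamma$n-Burst for processor $p$, with $\gamma=\lceil\frac{\ell_{\max}-s\ell_{\min}}{(s-1)\ell_{\min}}\rceil$: counter $c$ set to $0$ on (re)start; each cycle it forms lists $L_{\min},L_{\max}$ of pending tasks of cost $\ell_{\min},\ell_{\max}$ sorted by arrival. Case 1 (both lists $<n^2$): if previous task had cost $\ell_{\min}$, perform task at position $(pn)\bmod|L_{\max}|$ of $L_{\max}$, $c\gets0$; else task at position $(pn)\bmod|L_{\min}|$ of $L_{\min}$, $c\gets\min(c+1,\gamma)$. Case 2 ($|L_{\min}|\ge n^2>|L_{\max}|$): position $pn$ of $L_{\min}$, $c\gets\min(c+1,\gamma)$. Case 3 ($|L_{\max}|\ge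 n^2>|L_{\min}|$): position $pn$ of $L_{\max}$, $c\gets0$. Case 4 (both $\ge n^2$): if $c=\gamma$, position $pn$ of $L_{\max}$, $c\gets0$; else position $pn$ of $L_{\min}$, $c\gets\min(c+1,\gamma)$. Then report the task. *)

From mathcomp Require Import all_boot all_order all_algebra.
From mathcomp Require Import reals.
Set Implicit Arguments. Unset Strict Implicit. Unset Printing Implicit Defensive.
Import Order.TTheory GRing.Theory Num.Theory.
Local Open Scope ring_scope.

Inductive kind := Crash | Restart | Sched of nat | Report of nat.

(* An execution with n processors (processor p : 'I_n has id (val p).+1).
   [ev p k] is the k-th event (time, kind) of processor p, None once the
   (finite) trace has ended.  Tasks: [injected x], arrival time [arr x],
   cost ell_max iff [big x] (ell_min otherwise). *)
Record execution (R : realType) (n : nat) := Execution {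
  injected : nat -> Prop;
  arr : nat -> R;
  big : nat -> bool;
  ev : 'I_n -> nat -> option (R * kind)
}.

Section Model.
Variables (R : realType) (n : nat) (lmin lmax s : R) (E : execution R n).

Definition cost (x : nat) : R := if big E x then lmax else lmin.

Definition pending (t : R) (x : nat) : Prop :=
  injected E x /\ arr E x <= t /\
  ~ (exists (p : 'I_n) (k : nat) (t' : R), ev E p k = Some (t', Report x) /\ t' <= t).

Definition no_pending (t : R) : Prop := forall x, ~ pending t x.

Definition card_is (P : nat -> Prop) (k : nat) : Prop :=
  exists l : seq nat, uniq l /\ size l = k /\ forall x, x \in l <-> P x.

Definition at_least (P : nat -> Prop) (k : nat) : Prop :=
  exists l : seq nat, uniq l /\ (k <= size l)%N /\ forall x, x \in l -> P x.

(* order of the lists L_min, L_max: by arrival time, ties broken by id *)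
Definition prec (y x : nat) : Prop :=
  arr E y < arr E x \/ (arr E y = arr E x /\ (y < x)%N).

(* L_b(t): pending tasks of cost ell_max (b = true) / ell_min (b = false) *)
Definition inL (t : R) (b : bool) (y : nat) : Prop := pending t y /\ big E y = b.

(* x is at (0-based) position k of the sorted list L_b(t) *)
Definition at_pos (t : R) (b : bool) (x : nat) (k : nat) : Prop :=
  inL t b x /\ card_is (fun y => inL t b y /\ prec y x) k.

Definition gamma : int := Num.ceil ((lmax - s * lmin) / ((s - 1) * lmin)).

(* Processor p with counter c and memory prev (cost of the previous task
   since the last (re)start, None if none) choosing task x at time t. *)
Definition chooses (p : 'I_n) (c : int) (prev : option bool) (t : R) (x : nat) : Prop :=
  exists m1 m2 : nat,
    card_is (inL t false) m1 /\ card_is (inL t true) m2 /\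
    let P := ((val p).+1 * n)%N in
    let pick b m := at_pos t b x (P %% m)%N in
    let N2 := (n ^ 2)%N in
    if (m1 < N2)%N && (m2 < N2)%N then
      (* Case 1 (if the designated list is empty, the other one is used) *)
      if prev == Some false then
        (if (0 < m2)%N then pick true m2 else pick false m1)
      else (if (0 < m1)%N then pick false m1 else pick true m2)
    else if (m2 < N2)%N then pick false m1
    else if (m1 < N2)%N then pick true m2
    else if c == gamma then pick true m2 else pick false m1.

Definition new_counter (c : int) (x : nat) : int :=
  if big E x then 0 else Order.min (c + 1) gamma.

(* local state of a processor: Down since time t; Idle with counter and
   previous-task memory, idle since time t; Busy with counter, task, start. *)
Inductive pstate :=
  | Down of R
  | Idle of int & option bool & R
  | Busy of int & nat & R.

Definition step (p : 'I_n) (st : pstate) (e : R * kind) (st' : pstate) : Prop :=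
  let: (t, k) := e in
  match st, k with
  | Idle c pr t0, Crash =>
      st' = Down t /\ t0 <= t /\ (forall u, t0 <= u < t -> no_pending u)
  | Busy c x t0, Crash =>
      st' = Down t /\ t0 <= t /\ t < t0 + cost x / s
  | Down t0, Restart =>
      st' = Idle 0 None t /\ t0 <= t
  | Idle c pr t0, Sched x =>
      st' = Busy (new_counter c x) x t /\ t0 <= t /\
      (forall u, t0 <= u < t -> no_pending u) /\ chooses p c pr t x
  | Busy c x t0, Report y =>
      st' = Idle c (Some (big E x)) t /\ y = x /\ t = t0 + cost x / s
  | _, _ => False
  end.

(* final states of a finite trace: crashed forever, or idle forever with
   nothing pending *)
Definition final_ok (st : pstate) : Prop :=
  match st with
  | Down _ => True
  | Idle _ _ t0 => forall u, t0 <= u -> no_pending u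
  | Busy _ _ _ => False
  end.

Definition valid : Prop :=
  (forall t, exists l : seq nat, forall x, injected E x -> arr E x <= t -> x \in l) /\
  (forall p : 'I_n, exists st : nat -> pstate,
     st 0%N = Idle 0 None 0 /\
     forall k : nat, match ev E p k with
                     | Some e => step p (st k) e (st k.+1)
                     | None => ev E p k.+1 = None /\ final_ok (st k)
                     end).

Definition abs_exec (p : 'I_n) (x : nat) (t t' : R) : Prop :=
  exists k : nat, ev E p k = Some (t, Sched x) /\ ev E p k.+1 = Some (t', Report x).

End Model.

Definition is_interval (R : realType) (I : R -> Prop) : Prop :=
  forall x y z, I x -> I z -> x <= y -> y <= z -> I y.

Definition contained (R : realType) (I : R -> Prop) (t t' : R) : Prop :=
  forall u, t <= u -> u <= t' -> I u.

From mathcomp Require Import all_boot all_order all_algebra.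
From mathcomp Require Import reals.
From mathcomp Require Import zify lra.
From Stdlib Require Import Classical ClassicalEpsilon.
Import Order.TTheory GRing.Theory Num.Theory.
Local Open Scope ring_scope.
Set Implicit Arguments. Unset Strict Implicit.

(* While at least n^2 tasks of cost lmax are pending, a processor p choosing an
   lmax-task x takes it from position (p n) mod |L_max| of L_max; as |L_max| >= n^2,
   these positions are multiples of n, a different one for each processor.
   Let p1 and p2 start executions of x at times t1 <= t2.  As x is still pending
   at t2, we have t2 < t1 + lmax/s.  During [t1, t2] the tasks ahead of x in L_max
   can only disappear, each through a report by a processor other than p1, and no
   processor reports two lmax-tasks less than lmax/s apart.  So the position of x
   drops by at most n - 1, which forces p1 = p2; and a single processor never runs
   two overlapping executions. *)

Lemma card_is_at_least (P Q : nat -> Prop) m :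
  card_is P m -> (forall y, P y -> Q y) -> at_least Q m.
Proof. by move=> [l [Hu [<- Hl]]] PQ; exists l; split=> //; split=> // y /Hl /PQ. Qed.

Lemma at_least_card_is_leq (P : nat -> Prop) k m :
  at_least P k -> card_is P m -> (k <= m)%N.
Proof.
move=> [l [Hu [Hk Hl]]] [l' [Hu' [<- Hl']]].
by apply: leq_trans Hk (uniq_leq_size Hu _) => y /Hl /Hl'.
Qed.

Lemma card_is_le_inj (T : finType) (z : T) (Rel : nat -> T -> Prop)
    (A1 A2 : nat -> Prop) a1 a2 :
  card_is A1 a1 -> card_is A2 a2 ->
  (forall y, A1 y -> ~ A2 y -> exists2 q, q != z & Rel y q) ->
  (forall y y' q, A1 y -> A1 y' -> Rel y q -> Rel y' q -> y = y') ->
  (a1 <= a2 + #|T|.-1)%N.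
Proof.
move=> [l1 [Hu1 [<- Hl1]]] [l2 [Hu2 [<- Hl2]]] Hwit Hinj.
rewrite -(count_predC (mem l2) l1) -!size_filter; apply: leq_add.
  by apply: uniq_leq_size (filter_uniq _ Hu1) _ => y; rewrite mem_filter => /andP[].
set l3 := filter _ l1.
have Hl3 y : y \in l3 -> A1 y /\ ~ A2 y.
  by rewrite mem_filter => /andP[/negP y_l2 /Hl1]; split=> // /Hl2.
pose f y := epsilon (inhabits z) (fun q => q != z /\ Rel y q).
have Hf y : y \in l3 -> f y != z /\ Rel y (f y).
  move=> /Hl3[A1y nA2y]; apply: (epsilon_spec (inhabits z) (fun q => q != z /\ Rel y q)).
  by have [q] := Hwit y A1y nA2y; exists q.
rewrite -(size_map f) -(cardC1 z) cardE; apply: uniq_leq_size.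
  rewrite map_inj_in_uniq ?filter_uniq // => y y' Hy Hy' fyy'.
  apply: (Hinj y y' (f y)); [exact: (Hl3 y Hy).1 | exact: (Hl3 y' Hy').1 | exact: (Hf y Hy).2 |].
  by rewrite fyy'; exact: (Hf y' Hy').2.
by move=> q /mapP[y Hy ->]; rewrite mem_enum inE; exact: (Hf y Hy).1.
Qed.

Section Slots.
Variable n : nat.

(* Processor p : 'I_n has id p + 1. *)
Definition slot (p : 'I_n) (m : nat) : nat := (p.+1 * n) %% m.

Lemma slot_cases (p : 'I_n) m : (n ^ 2 <= m)%N ->
  slot p m = (p.+1 * n)%N \/ slot p m = 0%N /\ p.+1 = n.
Proof.
move=> Hm; have Hp := ltn_ord p.
have Hpn : (p.+1 * n <= m)%N.
  by apply: leq_trans Hm; rewrite -mulnn leq_mul2r Hp orbT.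
rewrite /slot; case: (ltnP (p.+1 * n) m) => [lt|ge].
  by left; rewrite modn_small.
have Hpm : (p.+1 * n = m)%N by apply/eqP; rewrite eqn_leq Hpn ge.
right; rewrite -Hpm modnn; split=> //; apply/eqP; rewrite eqn_leq Hp /=.
by move: Hm; rewrite -Hpm -mulnn leq_pmul2r // (leq_ltn_trans _ Hp).
Qed.

Lemma slot_eq (p1 p2 : 'I_n) m1 m2 : (n ^ 2 <= m1)%N -> (n ^ 2 <= m2)%N ->
  (slot p2 m2 <= slot p1 m1 <= slot p2 m2 + n.-1)%N -> p1 = p2.
Proof.
move=> /(slot_cases p1)[->|[-> e1]] /(slot_cases p2)[->|[-> e2]] bounds;
  apply: val_inj => /=; have := ltn_ord p1; have := ltn_ord p2; nia.
Qed.
End Slots.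

Section Execution.
Variables (R : realType) (n : nat) (lmin lmax s : R) (E : execution R n).
Hypotheses (lmin_gt0 : 0 < lmin) (lmin_lt_lmax : lmin < lmax) (s_gt1 : 1 < s).

Lemma cost_div_gt0 x : 0 < cost lmin lmax E x / s.
Proof.
have s_gt0 : 0 < s by apply: lt_trans s_gt1.
by rewrite /cost; case: big; rewrite divr_gt0 // (lt_trans lmin_gt0).
Qed.

Definition preceding (t : R) (x y : nat) : Prop := inL E t true y /\ prec E y x.

Lemma inL_antimono t1 t2 b y :
  t1 <= t2 -> arr E y <= t1 -> inL E t2 b y -> inL E t1 b y.
Proof.
move=> t12 arr_y [[inj_y [_ not_rep]] by_]; do !split=> //.
by move=> [q [j [u [Hu u_t1]]]]; apply: not_rep; exists q, j, u; split=> //; lra.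
Qed.

Lemma inL_dropped t1 t2 b y : t1 <= t2 -> inL E t1 b y -> ~ inL E t2 b y ->
  exists q j u, ev E q j = Some (u, Report y) /\ t1 < u <= t2.
Proof.
move=> t12 [[inj_y [arr_y not_rep]] by_] not_L2.
have [q [j [u [Hu u_t2]]]] : exists q j u, ev E q j = Some (u, Report y) /\ u <= t2.
  by apply: NNPP => no_rep; apply: not_L2; do !split=> //; lra.
exists q, j, u; split=> //; rewrite u_t2 andbT ltNge; apply/negP => u_t1.
by apply: not_rep; exists q, j, u.
Qed.

Lemma chooses_pending p c pr t x :
  chooses lmin lmax s E p c pr t x -> pending E t x.
Proof. by case=> [m1 [m2 [_ [_]]]] /=; repeat case: ifP => _; case=> [[]]. Qed.

Lemma chooses_big_slot p c pr t x :
  chooses lmin lmax s E p c pr t x -> big E x ->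
  at_least (inL E t true) (n ^ 2) ->
  exists2 m, (n ^ 2 <= m)%N & at_pos E t true x (slot p m).
Proof.
move=> [m1 [m2 [_ [card2 choice]]]] big_x many.
have m2_ge := at_least_card_is_leq many card2.
exists m2 => //; move: choice => /=; rewrite ![(m2 < _)%N]ltnNge m2_ge andbF /=.
by repeat case: ifP => _; try exact: id; case=> [[_]]; rewrite big_x.
Qed.

Definition is_run (q : 'I_n) (st : nat -> pstate R) : Prop :=
  st 0%N = Idle 0 None 0 /\
  forall k, match ev E q k with
            | Some e => step lmin lmax s E q (st k) e (st k.+1)
            | None => ev E q k.+1 = None /\ final_ok E (st k)
            end.

Definition pstate_time (st : pstate R) : R :=
  match st with Down t | Idle _ _ t | Busy _ _ t => t end.

Lemma run_step_time q st k t kd : is_run q st -> ev E q k = Some (t, kd) ->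
  pstate_time (st k) <= t /\ pstate_time (st k.+1) = t.
Proof.
move=> [_ run] ev_k; move: (run k); rewrite ev_k {ev_k} /=.
case: (st k) => [t0|c pr t0|c x t0]; case: kd => [||y|y] //=.
- by move=> [-> ?].
- by move=> [-> []].
- by move=> [-> []].
- by move=> [-> []].
- by move=> [-> [_ ->]] /=; split=> //; rewrite lerDl ltW // cost_div_gt0.
Qed.

Lemma run_ev_none q st k k' : is_run q st -> ev E q k = None -> (k <= k')%N ->
  ev E q k' = None.
Proof.
move=> [_ run] ev_k /subnKC <-; elim: (k' - k)%N => [|d IH]; first by rewrite addn0.
by move: (run (k + d)%N); rewrite IH addnS => -[].
Qed.

Hypothesis runs : forall q, exists st, is_run q st.

Lemma ev_time_mono q j j' tj kj t kd : (j <= j')%N ->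
  ev E q j = Some (tj, kj) -> ev E q j' = Some (t, kd) -> tj <= t.
Proof.
have [st run] := runs q; move=> + ev_j; elim: j' t kd => [|j' IH] t kd.
  by rewrite leqn0 => /eqP<-; rewrite ev_j => -[-> _].
rewrite leq_eqVlt ltnS => /predU1P[<-|le_j]; first by rewrite ev_j => -[-> _].
case ev_j': (ev E q j') => [[t0 k0]|]; last by rewrite (run_ev_none run ev_j').
move=> ev_j'1; apply: le_trans (IH _ _ le_j ev_j') _.
have [_ <-] := run_step_time run ev_j'; exact: (run_step_time run ev_j'1).1.
Qed.

Lemma report_sched q j t y : ev E q j = Some (t, Report y) ->
  exists j0 t0, [/\ j = j0.+1, ev E q j0 = Some (t0, Sched y)
                  & t = t0 + cost lmin lmax E y / s].
Proof.
have [st [st0 run]] := runs q; move=> ev_j; move: (run j); rewrite ev_j /=.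
case st_j: (st j) => [t0|c pr t0|c x t0] //= [_ [-> ->]].
case: j st_j ev_j => [|j0] st_j ev_j; first by rewrite st0 in st_j.
case ev_j0: (ev E q j0) => [[t1 k1]|]; last by move: (run j0); rewrite ev_j0 ev_j => -[].
move: (run j0); rewrite ev_j0 st_j /=.
case: (st j0) => [?|???|???]; case: k1 ev_j0 => [||?|?] //= ev_j0 [st_eq _];
  try discriminate st_eq; case: st_eq => _ -> ->.
by exists j0, t1.
Qed.

Lemma sched_chooses q k t x : ev E q k = Some (t, Sched x) ->
  exists c pr, chooses lmin lmax s E q c pr t x.
Proof.
have [st [_ run]] := runs q; move=> ev_k; move: (run k); rewrite ev_k /=.
by case: (st k) => [?|c pr ?|???] // [_ [_ [_ ?]]]; exists c, pr.
Qed.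

Lemma sched_pending q k t x : ev E q k = Some (t, Sched x) -> pending E t x.
Proof. by move=> /sched_chooses[c [pr /chooses_pending]]. Qed.

Lemma abs_exec_end p x t t' :
  abs_exec E p x t t' -> t' = t + cost lmin lmax E x / s.
Proof.
move=> [k [ev_k ev_k1]]; have [j0 [t0 [[<-] ev_j0 ->]]] := report_sched ev_k1.
by move: ev_j0; rewrite ev_k => -[->].
Qed.

Lemma abs_exec_no_event p x t t' j u kd :
  abs_exec E p x t t' -> ev E p j = Some (u, kd) -> u <= t \/ t' <= u.
Proof.
move=> [k [ev_k ev_k1]] ev_j; case: (leqP j k) => [le_jk|lt_kj].
  by left; apply: ev_time_mono le_jk ev_j ev_k.
by right; apply: ev_time_mono lt_kj ev_k1 ev_j.
Qed.

Lemma abs_exec_overlap p x y t1 t1' t2 t2' :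
  abs_exec E p x t1 t1' -> abs_exec E p y t2 t2' -> t1 <= t2 -> t2 < t1' ->
  [/\ x = y, t1 = t2 & t1' = t2'].
Proof.
move=> exec1 exec2; have := abs_exec_end exec2; have := cost_div_gt0 y.
move: exec1 exec2 => [k1 [s1 r1]] [k2 [s2 r2]].
case: (ltngtP k1 k2) => [lt_k|gt_k|eq_k].
- by have := ev_time_mono lt_k r1 s2; lra.
- by have := ev_time_mono gt_k r2 s1; lra.
- by move: s2 r2; rewrite -eq_k s1 r1 => -[-> ->] [->].
Qed.

Lemma report_gap q j j' u u' y y' : (j < j')%N -> big E y' ->
  ev E q j = Some (u, Report y) -> ev E q j' = Some (u', Report y') ->
  u + lmax / s <= u'.
Proof.
move=> lt_jj big_y' ev_j /report_sched[j0 [t0 [Hj' ev_j0 ->]]].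
move: lt_jj; rewrite Hj' ltnS => le_jj; rewrite /cost big_y' lerD2r.
exact: ev_time_mono le_jj ev_j ev_j0.
Qed.

Lemma big_report_inj q j j' u u' y y' : big E y -> big E y' ->
  ev E q j = Some (u, Report y) -> ev E q j' = Some (u', Report y') ->
  u < u' + lmax / s -> u' < u + lmax / s -> y = y'.
Proof.
move=> big_y big_y' ev_j ev_j' near1 near2.
case: (ltngtP j j') => [lt_jj|gt_jj|eq_j]; [exfalso..|].
- by have := report_gap lt_jj big_y' ev_j ev_j'; lra.
- by have := report_gap gt_jj big_y ev_j' ev_j; lra.
- by move: ev_j'; rewrite -eq_j ev_j => -[_ ->].
Qed.

Lemma card_preceding_window p1 x t1 t1' t2 a1 a2 :
  big E x -> abs_exec E p1 x t1 t1' -> t1 <= t2 -> t2 < t1' ->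
  card_is (preceding t1 x) a1 -> card_is (preceding t2 x) a2 ->
  (a2 <= a1 <= a2 + n.-1)%N.
Proof.
move=> big_x exec1 t12 t21 card1 card2.
have [k1 [s1 _]] := exec1; have [_ [arr_x _]] := sched_pending s1.
have t1'_eq : t1' = t1 + lmax / s by rewrite (abs_exec_end exec1) /cost big_x.
apply/andP; split.
  apply: (at_least_card_is_leq _ card1); apply: (card_is_at_least card2) => y [L2y prec_y].
  split=> //; apply: inL_antimono t12 _ L2y; by case: prec_y => [|[]]; lra.
pose reports_in_window y q := exists j u, ev E q j = Some (u, Report y) /\ t1 < u <= t2.
rewrite -[in X in (_ <= _ + X.-1)%N](card_ord n).
apply: (card_is_le_inj (z := p1) (Rel := reports_in_window) card1 card2).
  move=> y [L1y prec_y] nL2y.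
  have [q [j [u [rep_y window]]]] := inL_dropped t12 L1y (fun L2y => nL2y (conj L2y prec_y)).
  exists q; last by exists j, u.
  apply/eqP => q_p1; subst q; move/andP: window => [t1u ut2].
  by have := abs_exec_no_event exec1 rep_y; lra.
move=> y y' q [[_ big_y] _] [[_ big_y'] _] [j [u [rep /andP[t1u ut2]]]].
move=> [j' [u' [rep' /andP[t1u' ut2']]]].
by apply: big_report_inj big_y big_y' rep rep' _ _; lra.
Qed.

Lemma big_exec_same_processor x p1 p2 t1 t1' t2 t2' :
  big E x -> abs_exec E p1 x t1 t1' -> abs_exec E p2 x t2 t2' ->
  t1 <= t2 -> t2 < t1' ->
  at_least (inL E t1 true) (n ^ 2) -> at_least (inL E t2 true) (n ^ 2) ->
  p1 = p2.
Proof.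
move=> big_x exec1 [k2 [s2 _]] t12 t21 many1 many2; have [k1 [s1 _]] := exec1.
have [c1 [pr1 /chooses_big_slot/(_ big_x many1)[m1 m1_ge [_ card1]]]] := sched_chooses s1.
have [c2 [pr2 /chooses_big_slot/(_ big_x many2)[m2 m2_ge [_ card2]]]] := sched_chooses s2.
exact: slot_eq m1_ge m2_ge (card_preceding_window big_x exec1 t12 t21 card1 card2).
Qed.

Lemma big_exec_unique x p1 p2 t1 t1' t2 t2' :
  big E x -> abs_exec E p1 x t1 t1' -> abs_exec E p2 x t2 t2' -> t1 <= t2 ->
  at_least (inL E t1 true) (n ^ 2) -> at_least (inL E t2 true) (n ^ 2) ->
  (p1, t1, t1') = (p2, t2, t2').
Proof.
move=> big_x exec1 exec2 t12 many1 many2.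
have t21 : t2 < t1'.
  have [k1 [_ r1]] := exec1; have [k2 [s2 _]] := exec2.
  have [_ [_ not_reported]] := sched_pending s2.
  by rewrite ltNge; apply/negP => t1'_le; apply: not_reported; exists p1, k1.+1, t1'.
have p12 := big_exec_same_processor big_x exec1 exec2 t12 t21 many1 many2; subst p2.
by have [_ -> ->] := abs_exec_overlap exec1 exec2 t12 t21.
Qed.

End Execution.

Theorem lemma11 (R : realType) (n : nat) (lmin lmax s : R) (E : execution R n) :
  (0 < n)%N -> 0 < lmin -> lmin < lmax -> 1 < s ->
  valid lmin lmax s E ->
  forall I : R -> Prop, is_interval I ->
  (forall t, I t -> at_least (inL E t true) (n ^ 2)) ->
  forall (x : nat), big E x ->
  forall (p1 p2 : 'I_n) (t1 t1' t2 t2' : R),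
    abs_exec E p1 x t1 t1' -> contained I t1 t1' ->
    abs_exec E p2 x t2 t2' -> contained I t2 t2' ->
    (p1, t1, t1') = (p2, t2, t2').
Proof.
(* Only the start times of the two executions need to lie in I. *)
move=> _ lmin_gt0 lmin_lt_lmax s_gt1 [_ runs] I _ many x big_x p1 p2 t1 t1' t2 t2'.
have start_in p t t' : abs_exec E p x t t' -> contained I t t' -> I t.
  move=> exec in_I; apply: in_I => //; rewrite (abs_exec_end runs exec) lerDl ltW //.
  exact: cost_div_gt0.
move=> exec1 /(start_in _ _ _ exec1)/many many1 exec2 /(start_in _ _ _ exec2)/many many2.
have unique := big_exec_unique lmin_gt0 lmin_lt_lmax s_gt1 runs big_x.
case: (lerP t1 t2) => [t12|t21]; first exact: unique.
by rewrite (unique _ _ _ _ _ _ exec2 exec1 (ltW t21)).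
Qed.
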